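(* Let $k$ be a field of characteristic $\neq 2$, $\mathcal A=k[t,t^{-1},(1-t)^{-1}]\subset k(t)$, $t'=1-t^{-1}$, $t''=(1-t)^{-1}$, $\mathfrak g=\mathfrak{sl}_2(k)\otimes_k\mathcal A$, and let $x=\begin{pmatrix}-1&2\\0&1\end{pmatrix}$, $y=\begin{pmatrix}-1&0\\-2&1\end{pmatrix}$, $z=\begin{pmatrix}1&0\\0&-1\end{pmatrix}$. Put $u_0=\tfrac14\bigl(z\otimes 1+x\otimes t''+y\otimes(t''-1)\bigr)$, $u_1=\tfrac14\bigl(x\otimes 1+y\otimes t+z\otimes(t-1)\bigr)$, $u_2=\tfrac14\bigl(y\otimes 1+z\otimes t'+x\otimes(t'-1)\bigr)$. Then: (i) $\{u_0,u_1,u_2\}$ is a basis of $\mathfrak g$ as an $\mathcal A$-module; (ii) $[u_0,u_1]=-u_2t$, $[u_1,u_2]=-u_0t'$, $[u_2,u_0]=-u_1t''$; (iii) $u_0,u_1,u_2$ generate $\mathfrak g$ as a Lie algebra over $k$.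
   Context: $\mathfrak g$ is a Lie algebra over $\mathcal A$ with bracket $[a\otimes f,b\otimes g]=[a,b]\otimes fg$; for $g\in\mathfrak g$ and $a\in\mathcal A$, $ga$ denotes the $\mathcal A$-module action. *)

From HB Require Import structures.
From mathcomp Require Import all_boot all_order all_algebra fraction.
Set Implicit Arguments. Unset Strict Implicit. Unset Printing Implicit Defensive.
Import Order.TTheory GRing.Theory.
Local Open Scope ring_scope.

Section Defs.
Variable k : fieldType.

Definition Kt := {fraction {poly k}}.
Definition tK : Kt := FracField.tofrac ('X : {poly k}).
Definition cst (c : k) : Kt := FracField.tofrac (c%:P).

(* A = k[t, t^-1, (1-t)^-1] inside k(t) *)
Definition inA (f : Kt) : Prop :=
  exists (p : {poly k}) (a b : nat),
    f = FracField.tofrac p / (tK ^+ a * (1 - tK) ^+ b).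

Definition t' : Kt := 1 - tK^-1.
Definition t'' : Kt := (1 - tK)^-1.

(* g = sl_2(k) (x)_k A, realised as trace-zero 2x2 matrices with entries in A *)
Definition inG (M : 'M[Kt]_2) : Prop :=
  \tr M = 0 /\ forall i j, inA (M i j).

Definition mx2 (a b c d : Kt) : 'M[Kt]_2 :=
  \matrix_(i < 2, j < 2)
    if i == 0 :> nat then (if j == 0 :> nat then a else b)
    else (if j == 0 :> nat then c else d).

Definition xm : 'M[Kt]_2 := mx2 (-1) 2 0 1.
Definition ym : 'M[Kt]_2 := mx2 (-1) 0 (-2) 1.
Definition zm : 'M[Kt]_2 := mx2 1 0 0 (-1).

(* Lie bracket: [a (x) f, b (x) g] = [a,b] (x) fg, i.e. matrix commutator *)
Definition lie (M N : 'M[Kt]_2) : 'M[Kt]_2 := M *m N - N *m M.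

Definition u0 : 'M[Kt]_2 := 4^-1 *: (zm + t'' *: xm + (t'' - 1) *: ym).
Definition u1 : 'M[Kt]_2 := 4^-1 *: (xm + tK *: ym + (tK - 1) *: zm).
Definition u2 : 'M[Kt]_2 := 4^-1 *: (ym + t' *: zm + (t' - 1) *: xm).

Inductive lie_gen (S : 'M[Kt]_2 -> Prop) : 'M[Kt]_2 -> Prop :=
  | lg_base M : S M -> lie_gen S M
  | lg_zero : lie_gen S 0
  | lg_add M N : lie_gen S M -> lie_gen S N -> lie_gen S (M + N)
  | lg_scale (c : k) M : lie_gen S M -> lie_gen S (cst c *: M)
  | lg_bracket M N : lie_gen S M -> lie_gen S N -> lie_gen S (lie M N).

End Defs.

From HB Require Import structures.
From mathcomp Require Import all_boot all_order all_algebra fraction.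
From mathcomp Require Import ring.
Set Implicit Arguments. Unset Strict Implicit. Unset Printing Implicit Defensive.
Import GRing.Theory.
Local Open Scope ring_scope.

(* The u_i are explicit trace-zero matrices over k(t), so (i) and (ii) are identities
   between 2x2 matrices that hold over any field at any point t <> 0, 1 (with 2
   invertible); for (i) the coordinates of a trace-zero matrix are explicit linear
   forms in its entries whose coefficients lie in A.
   For (iii), let A_i be the set of f such that f u_i lies in the Lie algebra L
   generated by u0, u1, u2. Each A_i is a k-subspace containing 1 and, by (ii),
   A_0 A_1 t <= A_2, A_1 A_2 t' <= A_0 and A_2 A_0 t'' <= A_1. Chaining these
   inclusions with 1 shows that A_0 is stable under multiplication by t, t^-1 and
   (1-t)^-1, hence contains A; one more bracket carries A into A_1 and A_2, and by
   (i) every element of g is a sum of such f u_i. *)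

Section Mat2.
Variable R : pzRingType.

Definition mat2 (a b c d : R) : 'M[R]_2 :=
  \matrix_(i < 2, j < 2)
    if i == 0 :> nat then (if j == 0 :> nat then a else b)
    else (if j == 0 :> nat then c else d).

Lemma mat2E a b c d (i j : 'I_2) : mat2 a b c d i j =
  if i == 0 :> nat then (if j == 0 :> nat then a else b)
  else (if j == 0 :> nat then c else d).
Proof. by rewrite mxE. Qed.

Lemma mat2_eta (M : 'M[R]_2) : M = mat2 (M 0 0) (M 0 1) (M 1 0) (M 1 1).
Proof.
apply/matrixP; case=> [[|[|]]] // ? [[|[|]]] // ?; rewrite mxE /=.
all: by congr (M _ _); apply: val_inj.
Qed.

Ltac mat2_entrywise :=
  apply/matrixP; case=> [[|[|]]] // ? [[|[|]]] // ?; by rewrite !mxE.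

Lemma mat2D a b c d a' b' c' d' :
  mat2 a b c d + mat2 a' b' c' d' = mat2 (a + a') (b + b') (c + c') (d + d').
Proof. mat2_entrywise. Qed.

Lemma mat2N a b c d : - mat2 a b c d = mat2 (- a) (- b) (- c) (- d).
Proof. mat2_entrywise. Qed.

Lemma mat2Z e a b c d : e *: mat2 a b c d = mat2 (e * a) (e * b) (e * c) (e * d).
Proof. mat2_entrywise. Qed.

Lemma mat2M a b c d a' b' c' d' : mat2 a b c d *m mat2 a' b' c' d' =
  mat2 (a * a' + b * c') (a * b' + b * d') (c * a' + d * c') (c * b' + d * d').
Proof.
apply/matrixP; case=> [[|[|]]] // ? [[|[|]]] // ?.
all: by rewrite !mxE !big_ord_recr big_ord0 /= add0r !mxE.
Qed.

Lemma mat2_trace a b c d : \tr (mat2 a b c d) = a + d.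
Proof. by rewrite /mxtrace !big_ord_recr big_ord0 /= add0r !mxE. Qed.

Lemma trace0_mat2 (M : 'M[R]_2) : \tr M = 0 -> M 1 1 = - M 0 0.
Proof. by rewrite {1}[M]mat2_eta mat2_trace addrC => /eqP; rewrite addr_eq0 => /eqP. Qed.

Definition mat2_lin := (mat2Z, mat2M, mat2N, mat2D).

Definition sl2_x : 'M[R]_2 := mat2 (-1) 2 0 1.
Definition sl2_y : 'M[R]_2 := mat2 (-1) 0 (-2) 1.
Definition sl2_z : 'M[R]_2 := mat2 1 0 0 (-1).

End Mat2.

Arguments sl2_x {R}.
Arguments sl2_y {R}.
Arguments sl2_z {R}.

Definition mxcomm (R : pzRingType) n (M N : 'M[R]_n) := M *m N - N *m M.

Lemma mxcommZ (R : comPzRingType) n (a b : R) (M N : 'M[R]_n) :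
  mxcomm (a *: M) (b *: N) = (a * b) *: mxcomm M N.
Proof.
rewrite /mxcomm -!scalemxAl -!scalemxAr !scalerA scalerBr.
by rewrite [b * a]mulrC.
Qed.

(* [field] is fast over an abstract field but impractically slow on
   {fraction {poly k}}: the matrix identities are proved at an arbitrary point t and
   then specialised to t := tK k. *)
Section Sl2At.
Variables (F : fieldType) (t : F).

Definition t'_at := 1 - t^-1.
Definition t''_at := (1 - t)^-1.

Definition u0_at := 4^-1 *: (sl2_z + t''_at *: sl2_x + (t''_at - 1) *: sl2_y).
Definition u1_at := 4^-1 *: (sl2_x + t *: sl2_y + (t - 1) *: sl2_z).
Definition u2_at := 4^-1 *: (sl2_y + t'_at *: sl2_z + (t'_at - 1) *: sl2_x).

Definition coord0 (M : 'M[F]_2) := 2 * M 0 0 + M 0 1 - M 1 0 / t.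
Definition coord1 (M : 'M[F]_2) := - 2 * M 0 0 - t * t''_at * coord0 M.
Definition coord2 (M : 'M[F]_2) := - M 1 0 - t * M 0 1.

Hypotheses (t_neq0 : t != 0) (t_neq1 : 1 - t != 0) (two_neq0 : (2 : F) != 0).

Let four_neq0 : (4 : F) != 0.
Proof. have -> : (4 : F) = 2 * 2 by ring. exact: mulf_neq0. Qed.

Ltac field_at := field; by rewrite ?two_neq0 ?four_neq0 ?t_neq0 ?t_neq1.

Lemma mulr_t'_at : t * t'_at = t - 1.
Proof. rewrite /t'_at; field_at. Qed.

Lemma t''_at_t'_at : t''_at * t'_at = - t^-1.
Proof. rewrite /t'_at /t''_at; field_at. Qed.

Lemma t''_atK : t''_at * (1 - t) = 1.
Proof. exact: mulVf. Qed.

Lemma u0_atE :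
  u0_at = mat2 (- (t * t''_at) / 2) (t''_at / 2) (- (t * t''_at) / 2) (t * t''_at / 2).
Proof. rewrite /u0_at /sl2_x /sl2_y /sl2_z !mat2_lin /t''_at; congr mat2; field_at. Qed.

Lemma u1_atE : u1_at = mat2 (- 1 / 2) (1 / 2) (- t / 2) (1 / 2).
Proof. rewrite /u1_at /sl2_x /sl2_y /sl2_z !mat2_lin; congr mat2; field_at. Qed.

Lemma u2_atE : u2_at = mat2 0 (- t^-1 / 2) (- 1 / 2) 0.
Proof. rewrite /u2_at /sl2_x /sl2_y /sl2_z !mat2_lin /t'_at; congr mat2; field_at. Qed.

Definition u_atE := (u0_atE, u1_atE, u2_atE).

Lemma mxcomm_u01 : mxcomm u0_at u1_at = - (t *: u2_at).
Proof. rewrite /mxcomm !u_atE !mat2_lin /t''_at; congr mat2; field_at. Qed.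

Lemma mxcomm_u12 : mxcomm u1_at u2_at = - (t'_at *: u0_at).
Proof. rewrite /mxcomm !u_atE !mat2_lin /t'_at /t''_at; congr mat2; field_at. Qed.

Lemma mxcomm_u20 : mxcomm u2_at u0_at = - (t''_at *: u1_at).
Proof. rewrite /mxcomm !u_atE !mat2_lin /t''_at; congr mat2; field_at. Qed.

Lemma trace_u_at : [/\ \tr u0_at = 0, \tr u1_at = 0 & \tr u2_at = 0].
Proof. by rewrite !u_atE !mat2_trace; split; field_at. Qed.

Lemma coord_u_at a0 a1 a2 (M := a0 *: u0_at + a1 *: u1_at + a2 *: u2_at) :
  [/\ coord0 M = a0, coord1 M = a1 & coord2 M = a2].
Proof.
rewrite /M /coord1 /coord0 /coord2 !u_atE !mat2_lin !mat2E /= /t''_at.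
by split; field_at.
Qed.

Lemma u_at_coord (M : 'M[F]_2) : \tr M = 0 ->
  M = coord0 M *: u0_at + coord1 M *: u1_at + coord2 M *: u2_at.
Proof.
move=> /trace0_mat2 M11; rewrite {1}[M]mat2_eta M11.
rewrite /coord1 /coord0 /coord2 !u_atE !mat2_lin /t''_at; congr mat2; field_at.
Qed.

Lemma u_at_free a0 a1 a2 : a0 *: u0_at + a1 *: u1_at + a2 *: u2_at = 0 ->
  [/\ a0 = 0, a1 = 0 & a2 = 0].
Proof.
move=> comb0; have := coord_u_at a0 a1 a2; rewrite comb0 => -[<- <- <-].
by rewrite /coord1 /coord0 /coord2 !mxE; split; ring.
Qed.

End Sl2At.

HB.instance Definition _ (k : fieldType) :=
  GRing.RMorphism.copy (@cst k) (@FracField.tofrac {poly k} \o polyC).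

Section LaurentRing.
Variable k : fieldType.
Local Notation K := (Kt k).
Local Notation t := (tK k).
Local Notation tofrac := (@FracField.tofrac {poly k}).
Local Notation inA := (@inA k).

Lemma tK_neq0 : t != 0.
Proof. by rewrite tofrac_eq0 polyX_eq0. Qed.

Lemma subr_tK_neq0 : 1 - t != 0.
Proof.
rewrite -tofrac1 -tofracB tofrac_eq0 subr_eq0; apply/eqP => X1.
by have := congr1 (fun p : {poly k} => size p) X1; rewrite size_polyX size_poly1.
Qed.

Lemma two_neq0 : (2 \notin [pchar k])%N -> (2 : K) != 0.
Proof.
move=> char2; rewrite -(rmorph_nat (@cst k)) fmorph_eq0.
by apply: contra char2 => two0; rewrite inE two0.
Qed.

Lemma inA_tofrac p : inA (tofrac p).
Proof. by exists p, 0%N, 0%N; rewrite !expr0 mulr1 invr1 mulr1. Qed.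

Lemma inA_cst c : inA (cst c).
Proof. exact: inA_tofrac. Qed.

Lemma inA_nat n : inA n%:R.
Proof. by rewrite -(rmorph_nat (@cst k)); apply: inA_cst. Qed.

Lemma inA_natV n : inA n%:R^-1.
Proof. by rewrite -(rmorph_nat (@cst k)) -fmorphV; apply: inA_cst. Qed.

Lemma inA_0 : inA 0.
Proof. by rewrite -tofrac0; apply: inA_tofrac. Qed.

Lemma inA_1 : inA 1.
Proof. by rewrite -tofrac1; apply: inA_tofrac. Qed.

Lemma inA_t : inA t.
Proof. exact: inA_tofrac. Qed.

Lemma inA_tinv : inA t^-1.
Proof. by exists 1, 1%N, 0%N; rewrite rmorph1 expr1 expr0 mulr1 mul1r. Qed.

Lemma inA_t'' : inA (t'' k).
Proof. by exists 1, 0%N, 1%N; rewrite rmorph1 expr1 expr0 !mul1r. Qed.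

Let denom_neq0 a b : t ^+ a * (1 - t) ^+ b != 0.
Proof. by apply: mulf_neq0; apply: expf_neq0; [exact: tK_neq0 | exact: subr_tK_neq0]. Qed.

Let denomM a b a' b' :
  t ^+ a * (1 - t) ^+ b * (t ^+ a' * (1 - t) ^+ b') = t ^+ (a + a') * (1 - t) ^+ (b + b').
Proof. by rewrite !exprD; ring. Qed.

Lemma inA_add f g : inA f -> inA g -> inA (f + g).
Proof.
move=> [p [a [b ->]]] [q [a' [b' ->]]].
exists (p * ('X ^+ a' * (1 - 'X) ^+ b') + q * ('X ^+ a * (1 - 'X) ^+ b)).
exists (a + a')%N, (b + b')%N.
by rewrite addf_div ?denom_neq0 // denomM rmorphD !rmorphM !rmorphXn !rmorphB !rmorph1.
Qed.

Lemma inA_mul f g : inA f -> inA g -> inA (f * g).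
Proof.
move=> [p [a [b ->]]] [q [a' [b' ->]]].
by exists (p * q), (a + a')%N, (b + b')%N; rewrite mulf_div denomM rmorphM.
Qed.

Lemma inA_opp f : inA f -> inA (- f).
Proof. by rewrite -mulN1r -(rmorphN1 (@cst k)); apply/inA_mul/inA_cst. Qed.

Lemma tofrac_coef_sum p : tofrac p = \sum_(i < size p) cst p`_i * t ^+ i.
Proof.
rewrite -{1}(coefK p) poly_def rmorph_sum; apply: eq_bigr => i _.
by rewrite -mul_polyC rmorphM rmorphXn.
Qed.

Lemma inA_ind (P : K -> Prop) :
  P 1 -> (forall f g, P f -> P g -> P (f + g)) -> (forall c f, P f -> P (cst c * f)) ->
  (forall f, P f -> P (t * f)) -> (forall f, P f -> P (t^-1 * f)) ->
  (forall f, P f -> P (t'' k * f)) ->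
  forall f, inA f -> P f.
Proof.
move=> P1 PD PZ Pt PtV Pt'' _ [p [a [b ->]]].
have P0 : P 0 by rewrite -(mul0r 1) -(rmorph0 (@cst k)); apply: PZ.
have Pexp x n f : (forall g, P g -> P (x * g)) -> P f -> P (x ^+ n * f).
  move=> Px Pf; elim: n => [|n IHn]; first by rewrite expr0 mul1r.
  by rewrite exprS -mulrA; apply: Px.
rewrite tofrac_coef_sum mulr_suml; apply: big_ind => // i _.
rewrite invfM -!exprVn -!mulrA; apply/PZ/Pexp/Pexp => //.
by rewrite -[X in P X]mulr1; apply: Pexp.
Qed.

End LaurentRing.

Arguments tK_neq0 {k}.
Arguments subr_tK_neq0 {k}.

Ltac inA_closed := repeat match goal with
  | |- inA (_ + _) => apply: inA_add
  | |- inA (_ * _) => apply: inA_mul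
  | |- inA (- _) => apply: inA_opp
  | |- inA 0 => exact: inA_0
  | |- inA 1 => exact: inA_1
  | |- inA (_%:R) => exact: inA_nat
  | |- inA (_%:R^-1) => exact: inA_natV
  | |- inA (tK _) => exact: inA_t
  | |- inA (tK _)^-1 => exact: inA_tinv
  | |- inA (t''_at _) => exact: inA_t''
  | |- _ => assumption
  end.

Section Sl2Laurent.
Variable k : fieldType.
Hypothesis char2 : (2 \notin [pchar k])%N.
Local Notation K := (Kt k).
Local Notation t := (tK k).
Local Notation two := (two_neq0 char2).

Lemma lieZ (a b : K) (M N : 'M[K]_2) : lie (a *: M) (b *: N) = (a * b) *: lie M N.
Proof. exact: mxcommZ. Qed.

Lemma lie_u01 : lie (u0 k) (u1 k) = - (t *: u2 k).
Proof. exact: mxcomm_u01 tK_neq0 subr_tK_neq0 two. Qed.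

Lemma lie_u12 : lie (u1 k) (u2 k) = - (t' k *: u0 k).
Proof. exact: mxcomm_u12 tK_neq0 subr_tK_neq0 two. Qed.

Lemma lie_u20 : lie (u2 k) (u0 k) = - (t'' k *: u1 k).
Proof. exact: mxcomm_u20 tK_neq0 subr_tK_neq0 two. Qed.

Lemma inG_mat2 (M : 'M[K]_2) a b c d : \tr M = 0 -> M = mat2 a b c d ->
  inA a -> inA b -> inA c -> inA d -> inG M.
Proof.
move=> trM eM Aa Ab Ac Ad; split=> [|i j]; first exact: trM.
by rewrite eM mat2E; case: ifP; case: ifP.
Qed.

Lemma inG_u : inG (u0 k) /\ inG (u1 k) /\ inG (u2 k).
Proof.
have [tr0 tr1 tr2] := trace_u_at tK_neq0 subr_tK_neq0 two.
split; [|split].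
- by apply: inG_mat2 tr0 (u0_atE subr_tK_neq0 two) _ _ _ _; inA_closed.
- by apply: inG_mat2 tr1 (u1_atE t two) _ _ _ _; inA_closed.
- by apply: inG_mat2 tr2 (u2_atE tK_neq0 two) _ _ _ _; inA_closed.
Qed.

Lemma inG_coord (M : 'M[K]_2) : inG M -> exists a0 a1 a2 : K,
  [/\ inA a0, inA a1, inA a2 & M = a0 *: u0 k + a1 *: u1 k + a2 *: u2 k].
Proof.
move=> [trM AM]; exists (coord0 t M), (coord1 t M), (coord2 t M).
have A00 := AM 0 0; have A01 := AM 0 1; have A10 := AM 1 0.
split; [| | |exact: u_at_coord tK_neq0 subr_tK_neq0 two M trM].
all: rewrite /coord1 /coord0 /coord2; inA_closed.
Qed.

Lemma u_free (a0 a1 a2 : K) : a0 *: u0 k + a1 *: u1 k + a2 *: u2 k = 0 ->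
  [/\ a0 = 0, a1 = 0 & a2 = 0].
Proof. exact: u_at_free tK_neq0 subr_tK_neq0 two a0 a1 a2. Qed.

Definition u_gens (N : 'M[K]_2) : Prop := N = u0 k \/ N = u1 k \/ N = u2 k.
Definition gen_coef (u : 'M[K]_2) (f : K) : Prop := lie_gen u_gens (f *: u).

Lemma u0_gen : u_gens (u0 k). Proof. by left. Qed.
Lemma u1_gen : u_gens (u1 k). Proof. by right; left. Qed.
Lemma u2_gen : u_gens (u2 k). Proof. by right; right. Qed.

Lemma gen_coef1 u : u_gens u -> gen_coef u 1.
Proof. by move=> Su; rewrite /gen_coef scale1r; apply: lg_base. Qed.

Lemma gen_coefD u f g : gen_coef u f -> gen_coef u g -> gen_coef u (f + g).
Proof. by rewrite /gen_coef scalerDl; apply: lg_add. Qed.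

Lemma gen_coefZ u c f : gen_coef u f -> gen_coef u (cst c * f).
Proof. by rewrite /gen_coef -scalerA; apply: lg_scale. Qed.

Lemma gen_coefN u f : gen_coef u f -> gen_coef u (- f).
Proof. by move/(gen_coefZ (-1)); rewrite rmorphN1 mulN1r. Qed.

Lemma gen_coef01 f g :
  gen_coef (u0 k) f -> gen_coef (u1 k) g -> gen_coef (u2 k) (f * g * t).
Proof.
move=> Gf Gg; have := lg_bracket Gf Gg.
by rewrite lieZ lie_u01 scalerN scalerA -scaleNr => /gen_coefN; rewrite opprK.
Qed.

Lemma gen_coef12 f g :
  gen_coef (u1 k) f -> gen_coef (u2 k) g -> gen_coef (u0 k) (f * g * t' k).
Proof.
move=> Gf Gg; have := lg_bracket Gf Gg.
by rewrite lieZ lie_u12 scalerN scalerA -scaleNr => /gen_coefN; rewrite opprK.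
Qed.

Lemma gen_coef20 f g :
  gen_coef (u2 k) f -> gen_coef (u0 k) g -> gen_coef (u1 k) (f * g * t'' k).
Proof.
move=> Gf Gg; have := lg_bracket Gf Gg.
by rewrite lieZ lie_u20 scalerN scalerA -scaleNr => /gen_coefN; rewrite opprK.
Qed.

Let t_t' : t * t' k = t - 1 := mulr_t'_at tK_neq0.
Let t''_t' : t'' k * t' k = - t^-1 := t''_at_t'_at tK_neq0 subr_tK_neq0.
Let t''_1Bt : t'' k * (1 - t) = 1 := t''_atK subr_tK_neq0.

Lemma gen_coef0_mulVt f : gen_coef (u0 k) f -> gen_coef (u0 k) (t^-1 * f).
Proof.
move=> Gf; have := gen_coef12 (gen_coef20 (gen_coef1 u2_gen) Gf) (gen_coef1 u2_gen).
by rewrite mul1r mulr1 -mulrA t''_t' mulrN => /gen_coefN; rewrite opprK mulrC.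
Qed.

Lemma gen_coef0_mult f : gen_coef (u0 k) f -> gen_coef (u0 k) (t * f).
Proof.
move=> Gf; have := gen_coef12 (gen_coef1 u1_gen) (gen_coef01 Gf (gen_coef1 u1_gen)).
rewrite mul1r mulr1 -mulrA t_t' => /gen_coefD/(_ Gf).
by rewrite mulrBr mulr1 subrK mulrC.
Qed.

Lemma gen_coef0_mult'' f : gen_coef (u0 k) f -> gen_coef (u0 k) (t'' k * f).
Proof.
(* f u0 ~> f t'' u1 ~> f t'' t u2 ~> f t''^2 t u1 ~> f t''^2 t t' u0 = - f t'' u0 *)
move=> Gf; have G1 := gen_coef20 (gen_coef1 u2_gen) Gf.
have G2 := gen_coef20 (gen_coef01 (gen_coef1 u0_gen) G1) (gen_coef1 u0_gen).
have := gen_coef12 G2 (gen_coef1 u2_gen).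
rewrite !mul1r !mulr1 -!mulrA t''_t' mulrN (mulfV tK_neq0) mulrN1 mulrN.
by move=> /gen_coefN; rewrite opprK mulrC.
Qed.

Lemma gen_coef0_inA f : inA f -> gen_coef (u0 k) f.
Proof.
apply: inA_ind; [exact: gen_coef1 u0_gen | exact: gen_coefD | exact: gen_coefZ |
  exact: gen_coef0_mult | exact: gen_coef0_mulVt | exact: gen_coef0_mult''].
Qed.

Lemma gen_coef_inA u f : u_gens u -> inA f -> gen_coef u f.
Proof.
move=> [->|[->|->]] Af; first exact: gen_coef0_inA.
- have A1t : inA ((1 - t) * f) by inA_closed.
  have := gen_coef20 (gen_coef1 u2_gen) (gen_coef0_inA A1t).
  by rewrite mul1r mulrAC [_ * t'' k]mulrC t''_1Bt mul1r.
- have Atf : inA (t^-1 * f) by inA_closed.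
  have := gen_coef01 (gen_coef0_inA Atf) (gen_coef1 u1_gen).
  by rewrite mulr1 mulrAC (mulVf tK_neq0) mul1r.
Qed.

Lemma lie_gen_inG M : inG M -> lie_gen u_gens M.
Proof.
move=> /inG_coord [a0 [a1 [a2 [A0 A1 A2 ->]]]].
apply: lg_add; first apply: lg_add.
- exact: gen_coef_inA u0_gen A0.
- exact: gen_coef_inA u1_gen A1.
- exact: gen_coef_inA u2_gen A2.
Qed.

End Sl2Laurent.

Theorem theorem1p2 (k : fieldType) (hchar : (2 \notin [pchar k])%N) :
  (* (i) u0,u1,u2 form a basis of g as an A-module *)
  ((inG (u0 k) /\ inG (u1 k) /\ inG (u2 k)) /\
   (forall M, inG M -> exists a0 a1 a2 : Kt k,
       [/\ inA a0, inA a1, inA a2 & M = a0 *: u0 k + a1 *: u1 k + a2 *: u2 k]) /\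
   (forall a0 a1 a2 : Kt k, inA a0 -> inA a1 -> inA a2 ->
       a0 *: u0 k + a1 *: u1 k + a2 *: u2 k = 0 -> [/\ a0 = 0, a1 = 0 & a2 = 0])) /\
  (* (ii) bracket relations *)
  (lie (u0 k) (u1 k) = - (tK k *: u2 k) /\
   lie (u1 k) (u2 k) = - (t' k *: u0 k) /\
   lie (u2 k) (u0 k) = - (t'' k *: u1 k)) /\
  (* (iii) u0,u1,u2 generate g as a Lie algebra over k *)
  (forall M, inG M ->
     lie_gen (fun N => N = u0 k \/ N = u1 k \/ N = u2 k) M).
Proof.
split; [split; [exact: inG_u hchar | split] | split].
- exact: inG_coord hchar.
- by move=> a0 a1 a2 _ _ _; exact: (u_free hchar).
- by split; [exact: lie_u01 hchar | split; [exact: lie_u12 hchar | exact: lie_u20 hchar]].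
- exact: lie_gen_inG hchar.
Qed.
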